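(* (a) Let $1<p<2$. For all $x\in\mathbb{R}^n\setminus\{0\}$ and $y\in\mathbb{R}^n$, $$|x+y|^{p-2}(x+y)\cdot y\ge |x|^{p-2}x\cdot y+\omega_1|y|^2+(p-2)\omega_2(|x|-|x+y|)^2,$$ with $\omega_1=|x+y|^{p-2}$, $\omega_2=\frac{|x+y|^{p-1}}{(2-p)|x+y|+(p-1)|x|}$ if $|x|\le|x+y|$, and $\omega_1=\omega_2=|x|^{p-2}$ if $|x+y|\le|x|$. Moreover $\omega_1|y|^2+(p-2)\omega_2(|x|-|x+y|)^2\ge 0$, with equality only when $y=0$. (b) Let $p\ge2$. There exists $c_3=c_3(p)\in(0,\tfrac12]$ such that for all $x\in\mathbb{R}^n\setminus\{0\}$, $y\in\mathbb{R}^n$, $$|x+y|^{p-2}(x+y)\cdot y\ge |x|^{p-2}x\cdot y+\omega_3|y|^2+(p-2)\omega_4(|x|-|x+y|)^2,$$ where $\omega_3=\omega_4=|x|^{p-2}$ if $|x|\le|x+y|$; $\omega_3=\omega_4=\frac{|x+y|^{p-1}}{|x|}$ if $c_3^{\frac1{p-1}}|x|\le|x+y|\le|x|$; and $\omega_3=c_3|x|^{p-2}$, $\omega_4=\frac{|x+y|^{p-1}}{|x|}$ if $|x+y|\le c_3^{\frac1{p-1}}|x|$.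
   Context: Here $x\cdot y$ is the Euclidean inner product on $\mathbb{R}^n$ and $|\cdot|$ the Euclidean norm. *)

From HB Require Import structures.
From mathcomp Require Import all_boot all_order all_algebra.
From mathcomp Require Import all_classical all_reals.
From mathcomp Require Import exp.
Set Implicit Arguments. Unset Strict Implicit. Unset Printing Implicit Defensive.
Import Order.TTheory GRing.Theory Num.Theory.
Local Open Scope ring_scope.

Definition dotv {R : realType} {n : nat} (u v : 'rV[R]_n) : R :=
  \sum_(i < n) u 0 i * v 0 i.

Definition enorm {R : realType} {n : nat} (u : 'rV[R]_n) : R :=
  Num.sqrt (dotv u u).

From HB Require Import structures.
From mathcomp Require Import all_boot all_order all_algebra.
From mathcomp Require Import all_classical all_reals.
From mathcomp Require Import exp.
From mathcomp Require Import ring lra.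
Import Order.TTheory GRing.Theory Num.Theory.
Local Open Scope ring_scope.

(* Write a = |x|, b = |x+y| and u = x.(x+y). For fixed a and b both sides are
   affine in u, and in every regime the weights make the difference non-increasing
   in u; since u <= ab by Cauchy-Schwarz, the worst case is y parallel to x. There
   the inequality is a one-variable estimate on the increments of s |-> s^(p-1),
     (b - a) (b^(p-1) - a^(p-1)) >= W (b - a)^2,  W the sum of the two weights,
   which follows from the tangent-line inequality for this function, concave for
   p < 2 and convex for p >= 2. For p >= 2 the constant c3 = 1/p works. *)

Section PowerInequalities.
Context {R : realType}.

Lemma powR_concave_tangent {q u v : R} : 0 < q -> q < 1 -> 0 <= u -> 0 < v ->
  u `^ q <= v `^ q + q * v `^ (q - 1) * (u - v).
Proof.
move=> q0 q1 u0 v0; have q10 : 0 < 1 - q by rewrite subr_gt0.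
have V0 : 0 < v `^ (1 - q) := powR_gt0 _ v0.
(* Young with exponents 1/q and 1/(1-q): u^q v^(1-q) <= q u + (1-q) v. *)
have := @conjugate_powR R (u `^ q) (v `^ (1 - q)) q^-1 (1 - q)^-1
  (powR_ge0 _ _) (ltW V0).
rewrite !invr_gt0 q0 q10 !invrK addrC subrK => /(_ isT isT erefl).
rewrite -!powRrM !mulfV ?gt_eqF // !powRr1 ?(ltW v0) // => young.
have -> : v `^ q + q * v `^ (q - 1) * (u - v) = (v + q * (u - v)) / v `^ (1 - q).
  rewrite -(mulr_powRB1 (ltW v0) q0) -opprB powRN; field; by rewrite gt_eqF.
by rewrite ler_pdivlMr //; apply: (le_trans young); lra.
Qed.

Lemma powR_convex_tangent {q u v : R} : 1 <= q -> 0 <= u -> 0 <= v ->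
  v `^ q + q * v `^ (q - 1) * (u - v) <= u `^ q.
Proof.
move=> q1 u0 v0; have [->|q1'] := eqVneq q 1.
  by rewrite subrr powRr0 !powRr1 // mulr1 mul1r addrC subrK.
have {q1'} q1 : 1 < q by rewrite lt_neqAle eq_sym q1' q1.
have q0 : 0 < q by lra.
have q10 : 0 < q - 1 by rewrite subr_gt0.
have qq : q^-1 + (q / (q - 1))^-1 = 1 by field; rewrite !gt_eqF.
(* Young with exponents q and q/(q-1): u v^(q-1) <= u^q/q + v^q (q-1)/q. *)
have := @conjugate_powR R u (v `^ (q - 1)) q (q / (q - 1)) u0 (powR_ge0 _ _) q0
  (divr_gt0 q0 q10) qq.
rewrite -powRrM.
have -> : (q - 1) * (q / (q - 1)) = q by field; rewrite gt_eqF.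
rewrite -(mulr_powRB1 v0 q0) => young.
have := ler_wpM2l (ltW q0) young.
have -> : q * (u `^ q / q + v * v `^ (q - 1) / (q / (q - 1)))
  = u `^ q + (q - 1) * (v * v `^ (q - 1)) by field; rewrite !gt_eqF.
lra.
Qed.

Lemma mulr_powRB2 {p x : R} : 1 < p -> 0 <= x -> x * x `^ (p - 2) = x `^ (p - 1).
Proof.
move=> p1 x0; rewrite -(mulr_powRB1 (p := p - 1) x0) ?subr_gt0 //.
by have -> : p - 1 - 1 = p - 2 by ring.
Qed.

Lemma le0_ger_powR {r a b : R} : r <= 0 -> 0 < a -> a <= b -> b `^ r <= a `^ r.
Proof.
move=> r0 a0 ab; have b0 : 0 < b := lt_le_trans a0 ab.
have powRNN x : x `^ r = (x `^ (- r))^-1 by rewrite -powRN opprK.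
rewrite !powRNN lef_pV2 ?posrE ?powR_gt0 //.
by apply: ge0_ler_powR; rewrite ?nnegrE ?oppr_ge0 // ltW.
Qed.

Lemma powR_le_rootM {q c a b : R} : 0 < q -> 0 <= c -> 0 <= a -> 0 <= b ->
  b <= c `^ (1 / q) * a -> b `^ q <= c * a `^ q.
Proof.
move=> q0 c0 a0 b0 hb.
have t0 : 0 <= c `^ (1 / q) := powR_ge0 _ _.
apply: le_trans (ge0_ler_powR (ltW q0) _ _ hb) _; rewrite ?nnegrE ?mulr_ge0 //.
by rewrite powRM // -powRrM div1r mulVf ?gt_eqF // powRr1.
Qed.

Section ScalarCases.
Context {p a b : R}.
Hypotheses (a0 : 0 < a) (b0 : 0 <= b).
Let A := a `^ (p - 2).
Let B := b `^ (p - 2).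

Lemma scalar_sub2_ge : 1 < p -> p < 2 -> a <= b ->
  let k := (p - 2) * (b `^ (p - 1) / ((2 - p) * b + (p - 1) * a)) in
  [/\ 2 * B <= A + B, 0 < B + k
    & (B + k) * (b - a) ^+ 2 <= (b - a) * (b * B - a * A)].
Proof.
move=> p1 p2 ab k; have b0' : 0 < b := lt_le_trans a0 ab.
have B0 : 0 < B := powR_gt0 _ b0'.
set D : R := (2 - p) * b + (p - 1) * a.
have D0 : 0 < D.
  have : 0 < (2 - p) * b by rewrite mulr_gt0 // subr_gt0.
  have : 0 < (p - 1) * a by rewrite mulr_gt0 // subr_gt0.
  rewrite /D; lra.
have aD : a / D <= 1.
  have : 0 <= (2 - p) * (b - a) by rewrite mulr_ge0 // subr_ge0 // ltW.
  rewrite ler_pdivrMr // mul1r /D; lra.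
have wk : B + k = (p - 1) * B * (a / D).
  by rewrite /k -(mulr_powRB2 p1 b0) -/B /D; field; rewrite gt_eqF.
have q0 : 0 < p - 1 by rewrite subr_gt0.
have q1 : p - 1 < 1 by lra.
have := powR_concave_tangent q0 q1 (ltW a0) b0'.
have -> : p - 1 - 1 = p - 2 by ring.
rewrite -!(mulr_powRB2 p1) ?(ltW a0) // -/A -/B => tangent.
split.
- suff : B <= A by lra.
  by apply: le0_ger_powR; rewrite // subr_le0 ltW.
- by rewrite wk; apply: mulr_gt0; [exact: mulr_gt0 | exact: divr_gt0].
have K0 : 0 <= (p - 1) * B * (b - a) ^+ 2.
  by apply: mulr_ge0; [exact: ltW (mulr_gt0 q0 B0) | exact: sqr_ge0].
have := ler_piMl K0 aD.
have : (b - a) * ((p - 1) * B * (b - a)) <= (b - a) * (b * B - a * A).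
  by apply: ler_wpM2l; [rewrite subr_ge0 | lra].
rewrite [B + k]wk; lra.
Qed.

Lemma scalar_sub2_le : 1 < p -> p < 2 -> b <= a ->
  [/\ 0 < b -> 2 * A <= A + B, 0 < A + (p - 2) * A
    & (A + (p - 2) * A) * (b - a) ^+ 2 <= (b - a) * (b * B - a * A)].
Proof.
move=> p1 p2 ba; have A0 : 0 < A := powR_gt0 _ a0.
have q0 : 0 < p - 1 by rewrite subr_gt0.
have q1 : p - 1 < 1 by lra.
have := powR_concave_tangent q0 q1 b0 a0.
have -> : p - 1 - 1 = p - 2 by ring.
rewrite -!(mulr_powRB2 p1) ?(ltW a0) // -/A -/B => tangent.
split.
- move=> b0'; suff : A <= B by lra.
  by apply: le0_ger_powR; rewrite // subr_le0 ltW.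
- have -> : A + (p - 2) * A = (p - 1) * A by ring.
  exact: mulr_gt0.
have : (a - b) * ((p - 1) * A * (a - b)) <= (a - b) * (a * A - b * B).
  by apply: ler_wpM2l; [rewrite subr_ge0 | lra].
lra.
Qed.

Lemma scalar_sup2_ge : 2 <= p -> a <= b ->
  [/\ 2 * A <= A + B
    & (A + (p - 2) * A) * (b - a) ^+ 2 <= (b - a) * (b * B - a * A)].
Proof.
move=> p2 ab; have p1 : 1 < p by lra.
have q1 : 1 <= p - 1 by lra.
have := powR_convex_tangent q1 b0 (ltW a0).
have -> : p - 1 - 1 = p - 2 by ring.
rewrite -!(mulr_powRB2 p1) ?(ltW a0) // -/A -/B => tangent.
split.
- suff : A <= B by lra.
  by apply: ge0_ler_powR; rewrite ?nnegrE ?subr_ge0 // ltW.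
have : (b - a) * ((p - 1) * A * (b - a)) <= (b - a) * (b * B - a * A).
  by apply: ler_wpM2l; [rewrite subr_ge0 | lra].
lra.
Qed.

Lemma scalar_sup2_le : 2 <= p -> b <= a ->
  let W := b `^ (p - 1) / a in
  [/\ 2 * W <= A + B
    & (W + (p - 2) * W) * (b - a) ^+ 2 <= (b - a) * (b * B - a * A)].
Proof.
move=> p2 ba W; have p1 : 1 < p by lra.
have B0 : 0 <= B := powR_ge0 _ _.
have WB : W <= B by rewrite ler_pdivrMr // -mulr_powRB2 // mulrC ler_wpM2l.
have WA : W <= A.
  rewrite ler_pdivrMr // mulrC mulr_powRB2 ?(ltW a0) //.
  by apply: ge0_ler_powR; rewrite ?nnegrE ?(ltW a0) //; lra.
have q1 : 1 <= p - 1 by lra.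
have := powR_convex_tangent q1 (ltW a0) b0.
have -> : p - 1 - 1 = p - 2 by ring.
rewrite -!(mulr_powRB2 p1) ?(ltW a0) // -/A -/B => tangent.
split; first lra.
have : (a - b) * ((p - 1) * W * (a - b)) <= (a - b) * (a * A - b * B).
  apply: ler_wpM2l; first by rewrite subr_ge0.
  apply: le_trans (_ : (p - 1) * B * (a - b) <= _); last by lra.
  by rewrite ler_wpM2r ?subr_ge0 // ler_wpM2l // subr_ge0 ltW.
lra.
Qed.

Lemma scalar_sup2_small {c : R} : 2 <= p -> 0 <= c -> p * c <= 1 ->
  b <= c `^ (1 / (p - 1)) * a ->
  let W := b `^ (p - 1) / a in
  [/\ 2 * (c * A) <= A + B
    & (c * A + (p - 2) * W) * (b - a) ^+ 2 <= (b - a) * (b * B - a * A)].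
Proof.
move=> p2 c0 pc bt W; have p1 : 1 < p by lra.
have q0 : 0 < p - 1 by rewrite subr_gt0.
have A0 : 0 < A := powR_gt0 _ a0.
have B0 : 0 <= B := powR_ge0 _ _.
have c1 : 2 * c <= 1.
  have : 2 * c <= p * c by apply: ler_wpM2r.
  lra.
have ba : b <= a.
  apply: le_trans bt _; apply: ler_piMl (ltW a0) _.
  have : c `^ (1 / (p - 1)) <= 1 `^ (1 / (p - 1)).
    by apply: ge0_ler_powR; rewrite ?nnegrE ?divr_ge0 //; lra.
  by rewrite powR1.
have := powR_le_rootM q0 c0 (ltW a0) b0 bt.
rewrite -!(mulr_powRB2 p1) ?(ltW a0) // -/A -/B => small.
split.
  have : 0 <= (1 - 2 * c) * A by apply: mulr_ge0; [rewrite subr_ge0 | exact: ltW].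
  lra.
have W0 : 0 <= W by rewrite divr_ge0 ?powR_ge0 ?ltW.
have S0 : 0 <= c * A + (p - 2) * W.
  by apply: addr_ge0; apply: mulr_ge0; rewrite ?subr_ge0 // ltW.
have Sa : (c * A + (p - 2) * W) * a = c * (a * A) + (p - 2) * (b * B).
  by rewrite /W -(mulr_powRB2 p1 b0) -/B; field; rewrite gt_eqF.
have : (c * A + (p - 2) * W) * ((a - b) * (a - b))
    <= (c * (a * A) + (p - 2) * (b * B)) * (a - b).
  rewrite -Sa -mulrA; apply: ler_wpM2l => //.
  by apply: ler_wpM2r; rewrite ?subr_ge0 // lerBlDr lerDl.
have h1 := ler_wpM2l (ltW q0) small.
have h2 := ler_piMl (mulr_ge0 (ltW a0) (ltW A0)) pc.
have : (c * (a * A) + (p - 2) * (b * B)) * (a - b) <= (a * A - b * B) * (a - b).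
  by apply: ler_wpM2r; [rewrite subr_ge0 | lra].
lra.
Qed.

End ScalarCases.

End PowerInequalities.

Section EuclideanSpace.
Context {R : realType} {n : nat}.
Implicit Types x y z : 'rV[R]_n.

Lemma dotvC x y : dotv x y = dotv y x.
Proof. by apply: eq_bigr => i _; rewrite mulrC. Qed.

Lemma dotvDr x y z : dotv x (y + z) = dotv x y + dotv x z.
Proof. by rewrite /dotv -big_split; apply: eq_bigr => i _; rewrite mxE mulrDr. Qed.

Lemma dotvDl x y z : dotv (x + y) z = dotv x z + dotv y z.
Proof. by rewrite dotvC dotvDr !(dotvC z). Qed.

Lemma dotv0r x : dotv x 0 = 0.
Proof. by rewrite /dotv big1 // => i _; rewrite mxE mulr0. Qed.

Lemma dotv0l x : dotv 0 x = 0.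
Proof. by rewrite dotvC dotv0r. Qed.

Lemma dotvv_ge0 x : 0 <= dotv x x.
Proof. by apply: sumr_ge0 => i _; rewrite -expr2 sqr_ge0. Qed.

Lemma dotvv_eq0 x : (dotv x x == 0) = (x == 0).
Proof.
apply/idP/eqP => [|->]; last by rewrite dotv0r.
rewrite psumr_eq0 => [/allP x0|i _]; last by rewrite -expr2 sqr_ge0.
apply/rowP => i; apply/eqP; rewrite mxE -sqrf_eq0 expr2.
exact: x0 (mem_index_enum i).
Qed.

Lemma enorm_ge0 x : 0 <= enorm x.
Proof. exact: sqrtr_ge0. Qed.

Lemma enorm_sqr x : enorm x ^+ 2 = dotv x x.
Proof. by rewrite sqr_sqrtr // dotvv_ge0. Qed.

Lemma enorm_eq0 x : (enorm x == 0) = (x == 0).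
Proof. by rewrite -sqrf_eq0 enorm_sqr dotvv_eq0. Qed.

Lemma enorm_gt0 x : (0 < enorm x) = (x != 0).
Proof. by rewrite lt_neqAle enorm_ge0 andbT eq_sym enorm_eq0. Qed.

Lemma dotv_le_enormM x y : dotv x y <= enorm x * enorm y.
Proof.
have [->|x0] := eqVneq x 0; first by rewrite dotv0l mulr_ge0 ?enorm_ge0.
have [->|y0] := eqVneq y 0; first by rewrite dotv0r mulr_ge0 ?enorm_ge0.
set a := enorm x; set b := enorm y.
have ab0 : 0 < a * b by rewrite mulr_gt0 ?enorm_gt0.
have : 0 <= \sum_i (b * x 0 i - a * y 0 i) ^+ 2 by apply: sumr_ge0 => i _; exact: sqr_ge0.
have -> : \sum_i (b * x 0 i - a * y 0 i) ^+ 2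
    = b ^+ 2 * dotv x x - 2 * (a * b) * dotv x y + a ^+ 2 * dotv y y.
  rewrite /dotv !mulr_sumr -sumrB -big_split; apply: eq_bigr => i _ /=; ring.
rewrite -!enorm_sqr -/a -/b => h.
have : 0 <= 2 * (a * b) * (a * b - dotv x y) by lra.
by rewrite pmulr_rge0 ?subr_ge0 // mulr_gt0.
Qed.

Lemma enorm_sqrB x y :
  enorm y ^+ 2 = enorm x ^+ 2 + enorm (x + y) ^+ 2 - 2 * dotv x (x + y).
Proof. by rewrite !enorm_sqr !dotvDr !dotvDl (dotvC y x); ring. Qed.

Lemma sqr_enormB_le x y : (enorm x - enorm (x + y)) ^+ 2 <= enorm y ^+ 2.
Proof. by rewrite (enorm_sqrB x y); have := dotv_le_enormM x (x + y); lra. Qed.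

Lemma weighted_sqr_ge0 {x y} {w k : R} : 0 < w -> 0 < w + k ->
  let a := enorm x in let b := enorm (x + y) in
  0 <= w * enorm y ^+ 2 + k * (a - b) ^+ 2
  /\ (w * enorm y ^+ 2 + k * (a - b) ^+ 2 = 0 -> y = 0).
Proof.
move=> w0 wk0 a b.
have -> : w * enorm y ^+ 2 + k * (a - b) ^+ 2
    = w * (enorm y ^+ 2 - (a - b) ^+ 2) + (w + k) * (a - b) ^+ 2 by ring.
have h1 : 0 <= w * (enorm y ^+ 2 - (a - b) ^+ 2).
  by apply: mulr_ge0; [exact: ltW | rewrite subr_ge0 sqr_enormB_le].
have h2 : 0 <= (w + k) * (a - b) ^+ 2 by apply: mulr_ge0; [exact: ltW | exact: sqr_ge0].
split=> [|/eqP]; first exact: addr_ge0.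
rewrite paddr_eq0 // !mulf_eq0 (gt_eqF w0) (gt_eqF wk0) /= orbb.
move=> /andP[/eqP + /eqP ab]; rewrite ab expr0n subr0 => /eqP.
by rewrite sqrf_eq0 enorm_eq0 => /eqP.
Qed.

Lemma collinear_reduction {x y} {A B w k : R} :
  let a := enorm x in let b := enorm (x + y) in
  (0 < b -> 2 * w <= A + B) ->
  (w + k) * (b - a) ^+ 2 <= (b - a) * (b * B - a * A) ->
  A * dotv x y + w * enorm y ^+ 2 + k * (a - b) ^+ 2 <= B * dotv (x + y) y.
Proof.
move=> a b hw hs; set u := dotv x (x + y).
have hxy : dotv x y = u - a ^+ 2 by rewrite enorm_sqr /u dotvDr; ring.
have hyy : dotv (x + y) y = b ^+ 2 - u.
  by rewrite enorm_sqr /u dotvDr (dotvC x (x + y)); ring.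
have slack : 0 <= (A + B - 2 * w) * (a * b - u).
  have [b0|] := ltP 0 b.
    by apply: mulr_ge0; rewrite subr_ge0 ?hw ?dotv_le_enormM.
  move=> b_le0; have b0 : b = 0 by apply/le_anti; rewrite b_le0 enorm_ge0.
  have xy0 : x + y = 0 by apply/eqP; rewrite -enorm_eq0 -/b b0.
  by rewrite /u xy0 dotv0r b0 mulr0 subrr mulr0.
rewrite hxy hyy (enorm_sqrB x y) -/a -/b -/u; lra.
Qed.

End EuclideanSpace.

Theorem mainTheorem4 (R : realType) :
  (forall (p : R), 1 < p -> p < 2 ->
   forall (n : nat) (x y : 'rV[R]_n), x != 0 ->
   let a := enorm x in
   let b := enorm (x + y) in
   let lhs := b `^ (p - 2) * dotv (x + y) y in
   let base := a `^ (p - 2) * dotv x y in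
   (a <= b ->
      let w1 := b `^ (p - 2) in
      let w2 := b `^ (p - 1) / ((2 - p) * b + (p - 1) * a) in
      lhs >= base + w1 * enorm y ^+ 2 + (p - 2) * w2 * (a - b) ^+ 2
      /\ 0 <= w1 * enorm y ^+ 2 + (p - 2) * w2 * (a - b) ^+ 2
      /\ (w1 * enorm y ^+ 2 + (p - 2) * w2 * (a - b) ^+ 2 = 0 -> y = 0)) /\
   (b <= a ->
      let w1 := a `^ (p - 2) in
      let w2 := a `^ (p - 2) in
      lhs >= base + w1 * enorm y ^+ 2 + (p - 2) * w2 * (a - b) ^+ 2
      /\ 0 <= w1 * enorm y ^+ 2 + (p - 2) * w2 * (a - b) ^+ 2
      /\ (w1 * enorm y ^+ 2 + (p - 2) * w2 * (a - b) ^+ 2 = 0 -> y = 0)))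
  /\
  (forall (p : R), 2 <= p ->
   exists c3 : R, 0 < c3 /\ c3 <= 1 / 2 /\
   forall (n : nat) (x y : 'rV[R]_n), x != 0 ->
   let a := enorm x in
   let b := enorm (x + y) in
   let lhs := b `^ (p - 2) * dotv (x + y) y in
   let base := a `^ (p - 2) * dotv x y in
   let t := c3 `^ (1 / (p - 1)) in
   (a <= b ->
      let w3 := a `^ (p - 2) in
      let w4 := a `^ (p - 2) in
      lhs >= base + w3 * enorm y ^+ 2 + (p - 2) * w4 * (a - b) ^+ 2) /\
   (t * a <= b -> b <= a ->
      let w3 := b `^ (p - 1) / a in
      let w4 := b `^ (p - 1) / a in
      lhs >= base + w3 * enorm y ^+ 2 + (p - 2) * w4 * (a - b) ^+ 2) /\
   (b <= t * a ->
      let w3 := c3 * a `^ (p - 2) in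
      let w4 := b `^ (p - 1) / a in
      lhs >= base + w3 * enorm y ^+ 2 + (p - 2) * w4 * (a - b) ^+ 2)).
Proof.
split=> [p p1 p2 n x y x0 a b lhs base | p p2].
  have a0 : 0 < a by rewrite enorm_gt0.
  have b0 : 0 <= b := enorm_ge0 _.
  split=> [ab w1 w2 | ba w1 w2].
    have [hw hpos hs] := scalar_sub2_ge a0 b0 p1 p2 ab.
    split; first exact: collinear_reduction (fun=> hw) hs.
    exact: weighted_sqr_ge0 (powR_gt0 _ (lt_le_trans a0 ab)) hpos.
  have [hw hpos hs] := scalar_sub2_le a0 b0 p1 p2 ba.
  split; first exact: collinear_reduction hw hs.
  exact: weighted_sqr_ge0 (powR_gt0 _ a0) hpos.
have p0 : 0 < p by lra.
exists p^-1; split; first by rewrite invr_gt0.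
split; first by rewrite div1r lef_pV2 ?posrE.
move=> n x y x0 a b lhs base t.
have a0 : 0 < a by rewrite enorm_gt0.
have b0 : 0 <= b := enorm_ge0 _.
split; [|split].
- move=> ab; have [hw hs] := scalar_sup2_ge a0 b0 p2 ab.
  exact: collinear_reduction (fun=> hw) hs.
-
  move=> _ ba; have [hw hs] := scalar_sup2_le a0 b0 p2 ba.
  exact: collinear_reduction (fun=> hw) hs.
- move=> bt.
  have c0 : 0 <= p^-1 by rewrite invr_ge0 ltW.
  have pc : p * p^-1 <= 1 by rewrite mulfV ?gt_eqF.
  have [hw hs] := scalar_sup2_small a0 b0 p2 c0 pc bt.
  exact: collinear_reduction (fun=> hw) hs.
Qed.
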